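(* Assume: $g(x,u)\in[0,\infty]$ for all $x\in X$, $u\in U(x)$; $S^0\subset X$ and a stationary policy $\mu^0$ satisfy $f(x,\mu^0(x))\in S^0$ for all $x\in S^0$; for each $x\in X$, $\bar U(x)\subset U(x)$ is nonempty, with $\mu^0(x)\in\bar U(x)$ for all $x\in S^0$; and for every $J:X\to[0,\infty]$ and every $x\in X$ the infimum $\inf_{u\in\bar U(x)}\{g(x,u)+J(f(x,u))\}$ is attained. Let $\bar J_{S^0}(x)=J_{\mu^0}(x)$ for $x\in S^0$ and $\bar J_{S^0}(x)=\infty$ otherwise. Fix $\ell\ge1$, and let $\tilde J_{S^0}(x)$ be the optimal value of minimizing $\sum_{k=0}^{\ell-1}g(x_k,u_k)+\bar J_{S^0}(x_\ell)$ over $(u_0,\dots,u_{\ell-1})$ subject to $x_0=x$, $x_{k+1}=f(x_k,u_k)$, $u_k\in\bar U(x_k)$ for $k=0,\dots,\ell-1$, and let $\tilde\mu(x)=\tilde u_0$, the first control of a minimizing sequence $(\tilde u_0,\dots,\tilde u_{\ell-1})$ of this problem. Then $$J_{\tilde\mu}(x)\le\tilde J_{S^0}(x)\le\bar J_{S^0}(x)\quad\text{for all }x\in X.$$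
   Context: Deterministic infinite-horizon problem: arbitrary state space $X$ and control space $U$, dynamics $x_{k+1}=f(x_k,u_k)$ with $f:X\times U\to X$, nonempty control constraint sets $U(x)\subset U$. A stationary policy is a map $\mu:X\to U$ with $\mu(x)\in U(x)$ for all $x$; its cost function is $J_\mu(x_0)=\sum_{k=0}^\infty g(x_k,\mu(x_k))\in[0,\infty]$, where $x_{k+1}=f(x_k,\mu(x_k))$. Equivalently to the definition above, $\tilde J_{S^0}=J_\ell$ where $J_0=\bar J_{S^0}$, $J_{k+1}(x)=\min_{u\in\bar U(x)}\{g(x,u)+J_k(f(x,u))\}$, and $\tilde\mu(x)\in\arg\min_{u\in\bar U(x)}\{g(x,u)+J_{\ell-1}(f(x,u))\}$. *)

From HB Require Import structures.
From mathcomp Require Import all_boot all_order all_algebra.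
From mathcomp Require Import all_classical all_reals.
From mathcomp Require Import ereal topology normedtype sequences.
Set Implicit Arguments. Unset Strict Implicit. Unset Printing Implicit Defensive.
Import Order.TTheory GRing.Theory Num.Theory.
Local Open Scope classical_set_scope.
Local Open Scope ereal_scope.

Section DP.
Context {R : realType} {X U : Type}.

Definition traj (f : X -> U -> X) (mu : X -> U) (x0 : X) (k : nat) : X :=
  iter k (fun y => f y (mu y)) x0.

Definition Jpol (f : X -> U -> X) (g : X -> U -> \bar R) (mu : X -> U)
  (x0 : X) : \bar R :=
  \sum_(0 <= k <oo) g (traj f mu x0 k) (mu (traj f mu x0 k)).

Definition is_policy (Uc : X -> set U) (mu : X -> U) : Prop :=
  forall x, Uc x (mu x).

Definition Jbar (f : X -> U -> X) (g : X -> U -> \bar R) (S0 : set X)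
  (mu0 : X -> U) (x : X) : \bar R :=
  if `[< S0 x >] then Jpol f g mu0 x else +oo.

Fixpoint ctraj (f : X -> U -> X) (x0 : X) (us : nat -> U) (k : nat) : X :=
  match k with
  | 0 => x0
  | k'.+1 => f (ctraj f x0 us k') (us k')
  end.

Definition feasible (f : X -> U -> X) (Ubar : X -> set U) (l : nat)
  (x0 : X) (us : nat -> U) : Prop :=
  forall k, (k < l)%N -> Ubar (ctraj f x0 us k) (us k).

Definition lcost (f : X -> U -> X) (g : X -> U -> \bar R) (J : X -> \bar R)
  (l : nat) (x0 : X) (us : nat -> U) : \bar R :=
  \sum_(k < l) g (ctraj f x0 us k) (us k) + J (ctraj f x0 us l).

Definition Jtilde (f : X -> U -> X) (g : X -> U -> \bar R) (Ubar : X -> set U)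
  (J : X -> \bar R) (l : nat) (x0 : X) : \bar R :=
  ereal_inf [set lcost f g J l x0 us | us in [set us | feasible f Ubar l x0 us]].

End DP.

From HB Require Import structures.
From mathcomp Require Import all_boot all_order all_algebra.
From mathcomp Require Import all_classical all_reals.
From mathcomp Require Import ereal topology normedtype sequences.
Import Order.TTheory GRing.Theory Num.Theory.
Local Open Scope classical_set_scope.
Local Open Scope ereal_scope.

(* Write  J~_m  for the optimal value of the m-step lookahead problem with
   terminal cost J = Jbar_{S0}.  The argument has three ingredients.
   1. Policy cost bound: if W >= 0 satisfies g(y,mu y) + W(f(y,mu y)) <= W y
      for every y, then J_mu <= W (sum the inequality along the trajectory).
   2. Sequential improvement: Jbar_{S0} is "sequentially improving", i.e.
      wherever it is finite some admissible control does not increase it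
      (take mu0 and use the Bellman equation of J_{mu0} on the invariant S0).
      For such a terminal cost the lookahead values decrease in the horizon,
      J~_{m+1} <= J~_m, and J~_0 = J, whence J~_l <= J: the upper bound.
   3. One-step decomposition: the first step of any feasible control sequence
      of length m+1 costs at least g(y,u_0) + J~_m(f(y,u_0)).  Applied to the
      minimizing sequence defining mu~ and combined with 2, this gives
      g(y, mu~ y) + J~_l(f(y, mu~ y)) <= J~_l(y), so 1 yields J_mu~ <= J~_l. *)

Section Rollout.
Context {R : realType} {X U : Type}.
Context {f : X -> U -> X} {g : X -> U -> \bar R}.

Lemma ctraj_ext x (us vs : nat -> U) k :
  (forall j, (j < k)%N -> us j = vs j) -> ctraj f x us k = ctraj f x vs k.
Proof.
elim: k => [|k IH] eq_uv //=.
by rewrite IH ?eq_uv // => j jk; apply: eq_uv; apply: ltnW.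
Qed.

Lemma ctraj_shift x (us : nat -> U) k :
  ctraj f x us k.+1 = ctraj f (f x (us 0%N)) (fun j => us j.+1) k.
Proof. by elim: k => [|k IH] //=; rewrite -IH. Qed.

Lemma traj_shift (mu : X -> U) x k :
  traj f mu x k.+1 = traj f mu (f x (mu x)) k.
Proof. by rewrite /traj iterSr. Qed.

Lemma Jpol_step (mu : X -> U) : (forall y, 0 <= g y (mu y)) ->
  forall x, Jpol f g mu x = g x (mu x) + Jpol f g mu (f x (mu x)).
Proof.
move=> g0 x; rewrite /Jpol nneseries_recl //; congr (_ + _).
rewrite -(nneseries_addn 1) //; apply: congr_lim; apply: funext => n.
by apply: eq_bigr => i _; rewrite addn1 traj_shift.
Qed.

Lemma Jpol_le_superharmonic (mu : X -> U) (W : X -> \bar R) :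
  (forall y, 0 <= g y (mu y)) -> (forall y, 0 <= W y) ->
  (forall y, g y (mu y) + W (f y (mu y)) <= W y) ->
  forall x, Jpol f g mu x <= W x.
Proof.
move=> g0 W0 W_step x.
have partial N y :
    \sum_(k < N) g (traj f mu y k) (mu (traj f mu y k)) + W (traj f mu y N)
    <= W y.
  elim: N y => [|N IH] y; first by rewrite big_ord0 add0e.
  rewrite big_ord_recl -addeA (le_trans _ (W_step y)) // leeD2l //.
  under eq_bigr => i _ do rewrite lift0 traj_shift.
  by rewrite traj_shift IH.
rewrite /Jpol; apply: lime_le; first exact: is_cvg_ereal_nneg_natsum.
near=> N; rewrite big_mkord (le_trans _ (partial N x)) // leeDl //.
Unshelve. all: by end_near.
Qed.

Context {Ubar : X -> set U}.
Hypothesis g0 : forall x u, Ubar x u -> 0 <= g x u.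

Definition seq_improving (J : X -> \bar R) : Prop :=
  forall x, J x != +oo -> exists2 u, Ubar x u & g x u + J (f x u) <= J x.

Lemma sum_stage_ge0 {m : nat} {x : X} {us : nat -> U} : feasible f Ubar m x us ->
  0 <= \sum_(k < m) g (ctraj f x us k) (us k).
Proof. by move=> fus; apply: sume_ge0 => k _; apply/g0/fus. Qed.

Lemma Jtilde_ge0 (J : X -> \bar R) m x : (forall y, 0 <= J y) ->
  0 <= Jtilde f g Ubar J m x.
Proof.
move=> J0; apply/ereal_infP => _ [us fus <-].
by apply: adde_ge0 => //; exact: sum_stage_ge0.
Qed.

Lemma lcost_recl (J : X -> \bar R) m x (us : nat -> U) :
  lcost f g J m.+1 x us =
  g x (us 0%N) + lcost f g J m (f x (us 0%N)) (fun j => us j.+1).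
Proof.
rewrite /lcost big_ord_recl -addeA ctraj_shift; congr (_ + (_ + _)).
by apply: eq_bigr => i _; rewrite lift0 ctraj_shift.
Qed.

Lemma lcost_first_step {J : X -> \bar R} {m : nat} {x : X} {us : nat -> U} :
  feasible f Ubar m.+1 x us ->
  g x (us 0%N) + Jtilde f g Ubar J m (f x (us 0%N)) <= lcost f g J m.+1 x us.
Proof.
move=> fus; rewrite lcost_recl leeD2l //; apply: ereal_inf_lbound.
by exists (fun j => us j.+1) => // k km; rewrite -ctraj_shift; exact: fus.
Qed.

Lemma Jtilde_succ_le {J : X -> \bar R} : seq_improving J ->
  forall m x, Jtilde f g Ubar J m.+1 x <= Jtilde f g Ubar J m x.
Proof.
move=> J_impr m x; apply/ereal_infP => _ [vs fvs <-].
set z := ctraj f x vs m.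
have [Jz|] := eqVneq (J z) +oo.
  rewrite /lcost -/z Jz addey ?leey // gt_eqF //.
  exact: lt_le_trans ltNy0 (sum_stage_ge0 fvs).
move=> /J_impr[u Uu u_impr].
pose vs' k := if k == m then u else vs k.
have vs'E k : (k < m)%N -> vs' k = vs k by move=> km; rewrite /vs' ltn_eqF.
have traj'E k : (k <= m)%N -> ctraj f x vs' k = ctraj f x vs k.
  by move=> km; apply: ctraj_ext => j jk; apply: vs'E (leq_trans jk km).
have vs'm : vs' m = u by rewrite /vs' eqxx.
apply: ge_ereal_inf; exists (lcost f g J m.+1 x vs').
  exists vs' => // k; rewrite ltnS leq_eqVlt => /orP[/eqP ->|km].
    by rewrite traj'E // vs'm.
  by rewrite traj'E ?vs'E ?(ltnW km) //; exact: fvs.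
rewrite /lcost big_ord_recr /= vs'm traj'E // -/z -addeA.
under eq_bigr => i _ do rewrite vs'E // traj'E ?(ltnW (ltn_ord i)) //.
by rewrite leeD2l.
Qed.

Lemma Jtilde_le_terminal {J : X -> \bar R} : seq_improving J ->
  forall m x, Jtilde f g Ubar J m x <= J x.
Proof.
move=> J_impr; elim=> [|m IH] x; first last.
  exact: le_trans (Jtilde_succ_le J_impr m x) (IH x).
have [->|/J_impr[u _ _]] := eqVneq (J x) +oo; first exact: leey.
apply: ge_ereal_inf; exists (J x) => //.
by exists (fun _ => u) => //; rewrite /lcost big_ord0 add0e.
Qed.

Section BasePolicy.
Context {S0 : set X} {mu0 : X -> U}.
Hypothesis g0_mu0 : forall y, 0 <= g y (mu0 y).

Lemma Jbar_ge0 y : 0 <= Jbar f g S0 mu0 y.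
Proof. by rewrite /Jbar; case: asboolP => // _; exact: nneseries_ge0. Qed.

(* Jbar_{S0} is sequentially improving: where it is finite we are in S0,
   mu0 is admissible, and the Bellman equation of J_{mu0} holds with
   equality since S0 is invariant under mu0. *)
Lemma Jbar_seq_improving :
  (forall x, S0 x -> S0 (f x (mu0 x))) -> (forall x, S0 x -> Ubar x (mu0 x)) ->
  seq_improving (Jbar f g S0 mu0).
Proof.
move=> S0_inv S0_Ubar x; rewrite /Jbar.
case: asboolP => [S0x _|]; last by rewrite eqxx.
exists (mu0 x); first exact: S0_Ubar.
rewrite [Jpol _ _ _ x]Jpol_step //; case: asboolP => // /(_ (S0_inv x S0x)) [].
Qed.

End BasePolicy.

End Rollout.

Theorem proposition5 (R : realType) (X U : Type)
  (f : X -> U -> X) (g : X -> U -> \bar R) (Uc : X -> set U)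
  (S0 : set X) (mu0 : X -> U) (Ubar : X -> set U) (l : nat)
  (mut : X -> U) :
  (forall x, Uc x !=set0) ->
  (forall x u, Uc x u -> 0 <= g x u) ->
  is_policy Uc mu0 ->
  (forall x, S0 x -> S0 (f x (mu0 x))) ->
  (forall x, Ubar x `<=` Uc x) ->
  (forall x, Ubar x !=set0) ->
  (forall x, S0 x -> Ubar x (mu0 x)) ->
  (forall (J : X -> \bar R), (forall y, 0 <= J y) -> forall x,
     exists2 u, Ubar x u & forall v, Ubar x v -> g x u + J (f x u) <= g x v + J (f x v)) ->
  (1 <= l)%N ->
  (forall x, exists us, [/\ feasible f Ubar l x us,
       lcost f g (Jbar f g S0 mu0) l x us = Jtilde f g Ubar (Jbar f g S0 mu0) l x
     & mut x = us 0%N]) ->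
  forall x,
    Jpol f g mut x <= Jtilde f g Ubar (Jbar f g S0 mu0) l x /\
    Jtilde f g Ubar (Jbar f g S0 mu0) l x <= Jbar f g S0 mu0 x.
Proof.
move=> _ g0 mu0_pol S0_inv Ubar_sub _ S0_Ubar _ l_ge1 mut_opt x.
have g0_Ubar x' u : Ubar x' u -> 0 <= g x' u by move=> /Ubar_sub; exact: g0.
have g0_mu0 y : 0 <= g y (mu0 y) by apply: g0; exact: mu0_pol.
have Jbar_impr := Jbar_seq_improving g0_mu0 S0_inv S0_Ubar.
split; last exact: Jtilde_le_terminal.
case: l l_ge1 mut_opt => [//|m] _ mut_opt.
apply: Jpol_le_superharmonic => [y|y|y].
- by have [us [fus _ ->]] := mut_opt y; apply/g0_Ubar/(fus 0%N).
- exact/Jtilde_ge0/Jbar_ge0.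
- have [us [fus <- ->]] := mut_opt y.
  apply: le_trans (lcost_first_step fus); rewrite leeD2l //.
  exact: Jtilde_succ_le.
Qed.
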